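(* Let $\Psi,\Omega\subseteq\mathbb{F}[x;\sigma,\delta]$ be finite non-empty sets of skew polynomials of degree at least $1$ such that $\Psi\le\Omega$. If $\Omega$ is P-independent, then so is $\Psi$.
   Context: Let $\mathbb{F}$ be a division ring, $\sigma$ a ring endomorphism of $\mathbb{F}$ and $\delta$ a $\sigma$-derivation; $\mathbb{F}[x;\sigma,\delta]$ is the skew polynomial ring with $xa=\sigma(a)x+\delta(a)$ (a domain with right Euclidean division). For sets $\Psi,\Omega$ of skew polynomials, $\Psi\le\Omega$ means: for every finite non-empty subset $\{Q_1,\dots,Q_n\}\subseteq\Psi$ of size $n$ there is a subset $\{P_1,\dots,P_n\}\subseteq\Omega$ of size $n$ with $Q_i$ dividing $P_i$ on the right for each $i$. For a set $\Omega$, $I(\Omega)$ is the left ideal of skew polynomials right-divisible by every element of $\Omega$, $F_\Omega$ its monic generator of minimal degree (or $0$). $\Omega$ is P-independent if it is finite, $I(\Omega)\neq\{0\}$, and $\deg F_\Omega=\sum_{P\in\Omega}\deg P$. *)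

From HB Require Import structures.
From mathcomp Require Import all_boot all_order all_algebra.
Set Implicit Arguments.
Unset Strict Implicit.
Unset Printing Implicit Defensive.
Import Order.TTheory GRing.Theory.
Local Open Scope ring_scope.

(* Skew polynomials F[x; sigma, delta] are represented by their (ordinary)
   coefficient sequences {poly F}: p = \sum_i p`_i x^i (coefficients on the
   left).  Only the multiplication differs from {poly F}; it is defined below
   from the commutation rule x a = sigma(a) x + delta(a). *)

Definition division_ring (F : unitRingType) : Prop :=
  forall a : F, a != 0 -> a \is a GRing.unit.

Definition sigma_derivation (F : unitRingType) (sigma : {rmorphism F -> F})
  (delta : {additive F -> F}) : Prop :=
  forall a b : F, delta (a * b) = sigma a * delta b + delta a * b.

(* left multiplication by x:  x * (\sum a_i x^i) = \sum (sigma(a_i) x^{i+1} + delta(a_i) x^i) *)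
Definition skew_xmul (F : unitRingType) (sigma : F -> F) (delta : F -> F)
  (q : {poly F}) : {poly F} :=
  map_poly sigma q * 'X + map_poly delta q.

Definition skew_mul (F : unitRingType) (sigma : F -> F) (delta : F -> F)
  (p q : {poly F}) : {poly F} :=
  \sum_(i < size p) (p`_i)%:P * iter i (skew_xmul sigma delta) q.

Definition rdivides (F : unitRingType) (sigma delta : F -> F) (Q P : {poly F}) : Prop :=
  exists R : {poly F}, P = skew_mul sigma delta R Q.

Definition in_I (F : unitRingType) (sigma delta : F -> F) (Om : seq {poly F})
  (P : {poly F}) : Prop :=
  forall Q, Q \in Om -> rdivides sigma delta Q P.

(* Psi <= Omega (finite sets represented by duplicate-free sequences) *)
Definition skew_le (F : unitRingType) (sigma delta : F -> F)
  (Psi Om : seq {poly F}) : Prop :=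
  forall s : seq {poly F}, uniq s -> s != [::] -> {subset s <= Psi} ->
    exists t : seq {poly F},
      [/\ uniq t, size t = size s, {subset t <= Om} &
          forall i, (i < size s)%N -> rdivides sigma delta s`_i t`_i].

Definition P_independent (F : unitRingType) (sigma delta : F -> F)
  (Om : seq {poly F}) : Prop :=
  (exists G : {poly F}, G != 0 /\ in_I sigma delta Om G) /\
  (exists FO : {poly F},
     [/\ FO \is monic, in_I sigma delta Om FO,
         (forall G : {poly F}, G != 0 -> in_I sigma delta Om G -> (size FO <= size G)%N) &
         (size FO).-1 = (\sum_(P <- Om) (size P).-1)%N]).

From HB Require Import structures.
From mathcomp Require Import all_boot all_order all_algebra.
From mathcomp Require Import zify.
From Stdlib Require Import Classical_Prop.
Import GRing.Theory.
Local Open Scope ring_scope.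

Set Implicit Arguments.
Unset Strict Implicit.
Unset Printing Implicit Defensive.

(* Write p ** q for the skew product and deg p = size p - 1.  The proof has
   two halves, both resting on a left common multiple construction.
   - Upper bound: for finitely many nonzero B_k and arbitrary A_k there is a
     nonzero M with deg M <= sum_k deg B_k such that every M ** A_k is
     right-divisible by B_k (iterated left Ore condition; a single step comes
     from right Euclidean division and a pigeonhole argument on remainders).
     With A_k = 1 this puts an element of degree <= sum_{Q in Psi} deg Q into
     I(Psi), so deg F_Psi <= sum_{Q in Psi} deg Q.
   - Lower bound: Psi <= Omega gives t_i in Omega with t_i = R_i ** Q_i for the
     elements Q_i of Psi.  Writing F_Psi = S_i ** Q_i, a left common multiple M
     of the pairs (S_i, R_i) and (F_Psi, P) for P in Omega outside t makes
     M ** F_Psi an element of I(Omega); comparing its degree with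
     deg F_Omega = sum_{P in Omega} deg P yields
     deg F_Psi >= sum_{Q in Psi} deg Q. *)

Local Notation deg p := (size p).-1.

Lemma exists_minimizer (T : Type) (f : T -> nat) (Q : T -> Prop) :
  (exists x, Q x) -> exists2 x, Q x & forall y, Q y -> (f x <= f y)%N.
Proof.
move=> [x Qx]; move: {2}(f x) (leqnn (f x)) => n.
elim: n x Qx => [|n IH] x Qx hx.
  by exists x => // y _; move: hx; rewrite leqn0 => /eqP ->.
have [[y [Qy hy]] | hmin] := classic (exists y, Q y /\ (f y < f x)%N).
  by apply: (IH y Qy); rewrite -ltnS (leq_trans hy hx).
exists x => // y Qy; rewrite leqNgt; apply/negP => hy.
by apply: hmin; exists y.
Qed.

Lemma big_uniq_subseq_split (T : eqType) (f : T -> nat) (s t : seq T) :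
  uniq s -> uniq t -> {subset t <= s} ->
  (\sum_(x <- s) f x = \sum_(x <- t) f x + \sum_(x <- s | x \notin t) f x)%N.
Proof.
move=> us ut sub_ts.
rewrite -(perm_big _ (permEl (perm_filterC (mem t) s))) big_cat !big_filter.
congr (_ + _)%N; rewrite -[LHS]big_filter; apply: perm_big.
apply: uniq_perm; rewrite ?filter_uniq // => x.
by rewrite mem_filter andb_idr //; apply: sub_ts.
Qed.

Lemma size_subr_lead (R : nzRingType) (p q : {poly R}) :
  p != 0 -> size p = size q -> lead_coef p = lead_coef q -> (size (p - q)%R < size p)%N.
Proof.
move=> hp hs hl; have hsp : (0 < size p)%N by rewrite size_poly_gt0.
suff : (size (p - q)%R <= (size p).-1)%N by lia.
apply/leq_sizeP => j hj; rewrite coefB.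
have [->|hne] := eqVneq j (size p).-1.
  by move: hl; rewrite /lead_coef -hs => ->; rewrite subrr.
have hpj : (size p <= j)%N by rewrite -(prednK hsp) ltn_neqAle eq_sym hne hj.
by rewrite !nth_default ?subrr -?hs.
Qed.

(* Eliminate the last coordinate
   using a pivot k with v_k(n) != 0 (any k works if there is none). *)
Lemma left_dependence (F : unitRingType) (hF : division_ring F) n
    (v : 'I_n.+1 -> nat -> F) :
  exists2 c : 'I_n.+1 -> F, exists i, c i != 0 &
    forall j, (j < n)%N -> \sum_i c i * v i j = 0.
Proof.
elim: n v => [|n IH] v.
  by exists (fun _ => 1) => //; exists ord0; rewrite oner_neq0.
have [k pivot] : exists k, forall i, v i n * (v k n)^-1 * v k n = v i n.
  have [/existsP [k hk] | /existsPn all0] := boolP [exists i, v i n != 0].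
    by exists k => i; rewrite divrK // hF.
  by exists ord0 => i; move/negPn/eqP: (all0 i) => ->; rewrite !mul0r.
pose a i' := v (lift k i') n * (v k n)^-1.
have [c' [i0 hi0] hc'] := IH (fun i' j => v (lift k i') j - a i' * v k j).
exists (fun i => if unlift k i is Some i' then c' i' else - \sum_i' c' i' * a i').
  by exists (lift k i0); rewrite liftK.
move=> j hj; rewrite (bigD1_ord k) //= unlift_none.
rewrite [X in _ + X](eq_bigr (fun i' => c' i' * v (lift k i') j)) => [|i' _];
  last by rewrite liftK.
rewrite mulNr mulr_suml addrC; apply/eqP; rewrite subr_eq0; apply/eqP.
have [hjn | hjn] := ltnP j n.
  apply/eqP; rewrite -subr_eq0 -sumrB; apply/eqP; rewrite -[RHS](hc' j hjn).
  by apply: eq_bigr => i' _; rewrite mulrBr -mulrA.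
have -> : j = n by lia.
by apply: eq_bigr => i' _; rewrite -mulrA /a pivot.
Qed.

Section SkewMulLinear.

Variables (F : unitRingType) (s d : F -> F).
Local Notation "p ** q" := (skew_mul s d p q) (at level 40, left associativity).

Lemma skew_mul_widen (p q : {poly F}) n :
  (size p <= n)%N -> p ** q = \sum_(i < n) (p`_i)%:P * iter i (skew_xmul s d) q.
Proof.
move=> hn; rewrite /skew_mul.
rewrite (big_ord_widen n (fun i => (p`_i)%:P * iter i (skew_xmul s d) q) hn).
rewrite big_mkcond; apply: eq_bigr => i _.
by case: ltnP => // hi; rewrite nth_default // mul0r.
Qed.

Lemma skew_mul0p (q : {poly F}) : 0 ** q = 0.
Proof. by rewrite /skew_mul size_poly0 big_ord0. Qed.

Lemma skew_mulDl (p1 p2 q : {poly F}) : (p1 + p2) ** q = p1 ** q + p2 ** q.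
Proof.
pose n := maxn (size p1) (size p2).
rewrite (@skew_mul_widen _ _ n); last exact: leq_trans (size_polyD _ _) _.
rewrite (@skew_mul_widen p1 _ n) ?leq_maxl // (@skew_mul_widen p2 _ n) ?leq_maxr //.
by rewrite -big_split; apply: eq_bigr => i _; rewrite coefD polyCD mulrDl.
Qed.

Lemma skew_mul_suml I (r : seq I) (P : pred I) (G : I -> {poly F}) (q : {poly F}) :
  (\sum_(i <- r | P i) G i) ** q = \sum_(i <- r | P i) G i ** q.
Proof.
exact: (big_morph (skew_mul s d ^~ q) (fun p1 p2 => skew_mulDl p1 p2 q) (skew_mul0p q)).
Qed.

Lemma skew_mulCl (c : F) (p q : {poly F}) : (c%:P * p) ** q = c%:P * (p ** q).
Proof.
rewrite (@skew_mul_widen _ q (size p)); last by rewrite mul_polyC size_scale_leq.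
rewrite /skew_mul mulr_sumr; apply: eq_bigr => i _.
by rewrite coefCM polyCM mulrA.
Qed.

Lemma skew_mulMXaddC (p q : {poly F}) (c : F) :
  (p * 'X + c%:P) ** q = p ** skew_xmul s d q + c%:P * q.
Proof.
rewrite (@skew_mul_widen _ q (size p).+1); last by rewrite size_MXaddC; case: ifP.
rewrite big_ord_recl /= coefD coefMX coefC /= add0r addrC; congr (_ + _).
apply: eq_bigr => i _.
by rewrite coefD coefMX coefC /= addr0 -iterSr.
Qed.

Lemma skew_mulCp (c : F) (q : {poly F}) : c%:P ** q = c%:P * q.
Proof. by have := skew_mulMXaddC 0 q c; rewrite mul0r add0r skew_mul0p add0r. Qed.

End SkewMulLinear.

Section SkewRing.

Variables (F : unitRingType) (sigma : {rmorphism F -> F}) (delta : {additive F -> F}).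
Hypothesis hdelta : sigma_derivation sigma delta.
Local Notation xmul := (skew_xmul sigma delta).
Local Notation "p ** q" := (skew_mul sigma delta p q) (at level 40, left associativity).

Lemma coef_xmul (q : {poly F}) i :
  (xmul q)`_i = (if i is j.+1 then sigma q`_j else 0) + delta q`_i.
Proof. by rewrite /skew_xmul coefD coefMX !coef_map; case: i. Qed.

Lemma xmulD (p q : {poly F}) : xmul (p + q) = xmul p + xmul q.
Proof. by rewrite /skew_xmul !raddfD mulrDl addrACA. Qed.

Lemma xmul0 : xmul 0 = 0.
Proof. by rewrite /skew_xmul !map_poly0 mul0r addr0. Qed.

Lemma xmulCp (c : F) (r : {poly F}) :
  xmul (c%:P * r) = (sigma c)%:P * xmul r + (delta c)%:P * r.
Proof.
apply/polyP => i; rewrite coef_xmul coefD !coefCM coef_xmul.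
by case: i => [|i]; rewrite ?coefCM hdelta ?mulr0 ?add0r ?rmorphM ?mulrDr ?addrA.
Qed.

Lemma xmulMXaddC (q : {poly F}) (c : F) :
  xmul (q * 'X + c%:P) = (xmul q + (sigma c)%:P) * 'X + (delta c)%:P.
Proof.
apply/polyP => i; rewrite coef_xmul coefD coefMX coefC.
by case: i => [|[|i]] /=; rewrite !(coefD, coefMX, coefC, coef_map) /=
  ?(add0r, addr0) // addrC.
Qed.

Lemma xmul_skew_mul (p q : {poly F}) : xmul (p ** q) = xmul p ** q.
Proof.
elim/poly_ind: p q => [|p c IH] q; first by rewrite skew_mul0p xmul0 skew_mul0p.
rewrite xmulMXaddC skew_mulMXaddC xmulD IH xmulCp skew_mulMXaddC skew_mulDl.
by rewrite skew_mulCp addrA.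
Qed.

Lemma skew_mulA (p q r : {poly F}) : p ** q ** r = p ** (q ** r).
Proof.
elim/poly_ind: p q r => [|p c IH] q r; first by rewrite !skew_mul0p.
by rewrite !skew_mulMXaddC skew_mulDl IH skew_mulCl -xmul_skew_mul.
Qed.

(* sigma fixes 1 and delta kills it, so x ** x^k = x^(k+1) and right skew
   multiplication by x^k (in particular by 1) is the ordinary product. *)
Lemma delta1 : delta 1 = 0.
Proof.
have := hdelta 1 1; rewrite mul1r rmorph1 mul1r mulr1 => h.
by apply: (@addrI _ (delta 1)); rewrite addr0 -h.
Qed.

Lemma xmulXn k : xmul ('X^k : {poly F}) = 'X^(k.+1).
Proof.
apply/polyP => i; rewrite coef_xmul !coefXn.
have -> : delta (i == k)%:R = 0 by case: (i == k); rewrite ?delta1 ?raddf0.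
case: i => [|i]; rewrite ?coefXn addr0 // eqSS.
by case: (i == k); rewrite ?rmorph1 ?rmorph0.
Qed.

Lemma skew_mulXn (p : {poly F}) k : p ** 'X^k = p * 'X^k.
Proof.
elim/poly_ind: p k => [|p c IH] k; first by rewrite skew_mul0p mul0r.
by rewrite skew_mulMXaddC xmulXn IH mulrDl -mulrA -exprS.
Qed.

Lemma skew_mulp1 (p : {poly F}) : p ** 1 = p.
Proof. by have := skew_mulXn p 0; rewrite expr0 mulr1. Qed.

End SkewRing.

Section Divisibility.

Variables (F : unitRingType) (sigma : {rmorphism F -> F}) (delta : {additive F -> F}).
Hypothesis hdelta : sigma_derivation sigma delta.
Local Notation "p ** q" := (skew_mul sigma delta p q) (at level 40, left associativity).
Local Notation rdiv := (rdivides sigma delta).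
Local Notation I := (in_I sigma delta).

Lemma rdivides_trans (Q P G : {poly F}) : rdiv Q P -> rdiv P G -> rdiv Q G.
Proof. by move=> [R ->] [S ->]; exists (S ** R); rewrite skew_mulA. Qed.

Lemma rdivides_mull (R Q P : {poly F}) : rdiv Q P -> rdiv Q (R ** P).
Proof. by move=> [S ->]; exists (R ** S); rewrite skew_mulA. Qed.

Lemma in_I_mull (Om : seq {poly F}) (R P : {poly F}) : I Om P -> I Om (R ** P).
Proof. by move=> hP Q /hP; apply: rdivides_mull. Qed.

Lemma skew_le_in_I (Psi Om : seq {poly F}) (G : {poly F}) :
  skew_le sigma delta Psi Om -> I Om G -> I Psi G.
Proof.
move=> hle hG Q hQ.
have [|t [_ st sub_t div_t]] := hle [:: Q] erefl erefl.
  by move=> x; rewrite inE => /eqP ->.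
have t0 : t`_0 \in Om by apply: sub_t; apply: mem_nth; rewrite st.
exact: rdivides_trans (div_t 0%N erefl) (hG _ t0).
Qed.

End Divisibility.

Section Degree.

Variables (F : unitRingType) (sigma : {rmorphism F -> F}) (delta : {additive F -> F}).
Hypothesis hF : division_ring F.
Local Notation xmul := (skew_xmul sigma delta).
Local Notation "p ** q" := (skew_mul sigma delta p q) (at level 40, left associativity).

Lemma unit_neq0 (a : F) : a \is a GRing.unit -> a != 0.
Proof. by apply: contraTneq => ->; rewrite unitr0. Qed.

Lemma lreg_neq0 (c : F) : c != 0 -> GRing.lreg c.
Proof. by move/hF; apply: mulrI. Qed.

Lemma iter_sigma_unit k (a : F) : a \is a GRing.unit -> iter k sigma a \is a GRing.unit.
Proof. by elim: k => //= k IH /IH; apply: rmorph_unit. Qed.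

Lemma size_map_poly_additive (f : {additive F -> F}) (q : {poly F}) :
  (size (map_poly f q) <= size q)%N.
Proof. by apply/leq_sizeP => j hj; rewrite coef_map nth_default // raddf0. Qed.

Lemma size_xmul (q : {poly F}) : q != 0 ->
  size (xmul q) = (size q).+1 /\ lead_coef (xmul q) = sigma (lead_coef q).
Proof.
move=> hq.
have hl0 : sigma (lead_coef q) != 0.
  by apply/unit_neq0/rmorph_unit/hF; rewrite lead_coef_eq0.
have hs : size (map_poly sigma q) = size q by apply: size_map_poly_id0.
have hm : map_poly sigma q != 0 by rewrite -size_poly_eq0 hs size_poly_eq0.
have hlt : (size (map_poly delta q) < size (map_poly sigma q * 'X)%R)%N.
  by rewrite size_mulX // hs ltnS size_map_poly_additive.
rewrite /skew_xmul size_polyDl // lead_coefDl // size_mulX // hs lead_coefMX.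
by rewrite lead_coef_map_id0 ?rmorph0.
Qed.

Lemma size_skew_mul (p q : {poly F}) : p != 0 -> q != 0 ->
  size (p ** q) = (size p + size q).-1 /\
  lead_coef (p ** q) = lead_coef p * iter (size p).-1 sigma (lead_coef q).
Proof.
elim/poly_ind: p q => [|p c IH] q; first by rewrite eqxx.
move=> hpc hq; rewrite skew_mulMXaddC.
have [p0|p0] := eqVneq p 0.
  move: hpc; rewrite p0 mul0r add0r skew_mul0p add0r polyC_eq0 => hc.
  have hcr := lreg_neq0 hc.
  by rewrite mul_polyC lreg_size // lead_coef_lreg // size_polyC hc lead_coefC.
have [hs1 hl1] := size_xmul hq.
have hxq : xmul q != 0 by rewrite -size_poly_eq0 hs1.
have [hs hl] := IH _ p0 hxq.
have hsp : (0 < size p)%N by rewrite size_poly_gt0.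
have hlt : (size (c%:P * q)%R < size (p ** xmul q))%N.
  rewrite hs hs1 mul_polyC; apply: leq_ltn_trans (size_scale_leq _ _) _; lia.
have hpX : (size c%:P < size (p * 'X)%R)%N.
  by rewrite size_mulX // size_polyC; case: (c != 0); lia.
rewrite size_polyDl // lead_coefDl // hs hs1 hl hl1 size_polyDl // lead_coefDl //.
rewrite size_mulX // lead_coefMX -iterSr prednK //; split=> //; lia.
Qed.

Lemma deg_skew_mul (p q : {poly F}) : p != 0 -> q != 0 ->
  deg (p ** q) = (deg p + deg q)%N.
Proof.
move=> hp hq; have [-> _] := size_skew_mul hp hq.
by move: hp hq; rewrite -!size_poly_gt0; lia.
Qed.

Lemma skew_mul_neq0 (p q : {poly F}) : p != 0 -> q != 0 -> p ** q != 0.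
Proof.
move=> hp hq; have [hs _] := size_skew_mul hp hq.
by rewrite -size_poly_gt0 hs; move: hp hq; rewrite -!size_poly_gt0; lia.
Qed.

End Degree.

Section LeftOre.

Variables (F : unitRingType) (sigma : {rmorphism F -> F}) (delta : {additive F -> F}).
Hypotheses (hF : division_ring F) (hdelta : sigma_derivation sigma delta).
Local Notation "p ** q" := (skew_mul sigma delta p q) (at level 40, left associativity).
Local Notation rdiv := (rdivides sigma delta).

Lemma skew_rdiv (B : {poly F}) : B != 0 ->
  forall P : {poly F}, exists Q R, P = Q ** B + R /\ (size R < size B)%N.
Proof.
move=> hB P; have hsB : (0 < size B)%N by rewrite size_poly_gt0.
elim: {P}(size P) {-2}P (leqnn (size P)) => [|n IH] P hP.
  by exists 0, P; rewrite skew_mul0p add0r; split=> //; lia.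
have [hlt|hge] := ltnP (size P) (size B); first by exists 0, P; rewrite skew_mul0p add0r.
have hP0 : P != 0 by rewrite -size_poly_gt0; lia.
pose k := (size P - size B)%N.
pose c := lead_coef P / iter k sigma (lead_coef B).
have hw : iter k sigma (lead_coef B) \is a GRing.unit.
  by apply/iter_sigma_unit/hF; rewrite lead_coef_eq0.
have hc : c \is a GRing.unit by rewrite unitrMl ?unitrV // hF ?lead_coef_eq0.
have hcr : GRing.lreg c := mulrI hc.
pose m := c%:P * 'X^k.
have hsm : size m = k.+1 by rewrite /m mul_polyC lreg_size // size_polyXn.
have hm0 : m != 0 by rewrite -size_poly_gt0 hsm.
have [hs hl] := size_skew_mul sigma delta hF hm0 hB.
have hsmB : size (m ** B) = size P by rewrite hs hsm; lia.
have hlmB : lead_coef (m ** B) = lead_coef P.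
  by rewrite hl hsm /m mul_polyC lead_coef_lreg // lead_coefXn mulr1 /c divrK.
have hd := size_subr_lead hP0 (esym hsmB) (esym hlmB).
have [Q [R [hQR hR]]] := IH (P - m ** B) (leq_trans hd hP).
by exists (Q + m), R; rewrite skew_mulDl addrAC -hQR subrK.
Qed.

(* Left Ore condition with degree control: the n+1 remainders of x^i ** A
   modulo B (n = deg B) have n coordinates, so a nontrivial combination
   M = sum c_i x^i of them vanishes and B right-divides M ** A. *)
Lemma skew_left_ore (A B : {poly F}) : B != 0 ->
  exists2 M : {poly F}, M != 0 /\ (size M <= size B)%N & rdiv B (M ** A).
Proof.
move=> hB; pose n := (size B).-1.
have hsB : size B = n.+1 by rewrite prednK // size_poly_gt0.
have /fin_all_exists [QR hQR] : forall i : 'I_n.+1, exists QR : {poly F} * {poly F},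
    'X^i ** A = QR.1 ** B + QR.2 /\ (size QR.2 < size B)%N.
  by move=> i; have [Q [R hQR]] := skew_rdiv hB ('X^i ** A); exists (Q, R).
have [c [i0 hi0] hc] := left_dependence hF (fun i j => (QR i).2`_j).
pose M := \poly_(i < n.+1) c (inord i).
have hMA : M ** A = (\sum_i (c i)%:P * (QR i).1) ** B + \sum_i (c i)%:P * (QR i).2.
  rewrite /M poly_def !skew_mul_suml -big_split; apply: eq_bigr => i _.
  by rewrite inord_val -mul_polyC skew_mulCl (hQR i).1 mulrDr skew_mulCl.
have hR0 : \sum_i (c i)%:P * (QR i).2 = 0.
  apply/polyP => j; rewrite coef_sum coef0.
  have [hj|hj] := ltnP j n.
    by rewrite -[RHS](hc j hj); apply: eq_bigr => i _; rewrite coefCM.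
  rewrite big1 // => i _; rewrite coefCM nth_default ?mulr0 //.
  by have := (hQR i).2; rewrite hsB ltnS => /leq_trans; apply.
exists M; first split.
- apply/eqP => /(congr1 (fun p : {poly F} => p`_i0)).
  by rewrite coef_poly ltn_ord inord_val coef0; apply/eqP.
- by rewrite hsB size_poly.
by exists (\sum_i (c i)%:P * (QR i).1); rewrite hMA hR0 addr0.
Qed.

Lemma common_left_multiple (L : seq ({poly F} * {poly F})) :
  (forall ab, ab \in L -> ab.2 != 0) ->
  exists2 M : {poly F}, M != 0 /\ (deg M <= \sum_(ab <- L) deg ab.2)%N &
    forall ab, ab \in L -> rdiv ab.2 (M ** ab.1).
Proof.
elim: L => [|[a b] L IH] hL.
  by exists 1 => //; rewrite oner_neq0 size_poly1.
case: IH => [ab h|M0 [M00 hM0] hdivM0]; first by apply: hL; rewrite inE h orbT.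
have hb : b != 0 := hL (a, b) (mem_head _ _).
have [M' [M'0 hM'] hdiv'] := skew_left_ore (M0 ** a) hb.
exists (M' ** M0); first split.
- exact: skew_mul_neq0.
- by rewrite deg_skew_mul // big_cons leq_add // -!subn1 leq_sub2r.
move=> ab; rewrite inE => /predU1P [-> | hab]; first by rewrite skew_mulA.
by rewrite skew_mulA //; apply/rdivides_mull/hdivM0.
Qed.

End LeftOre.

Section IdealBounds.

Variables (F : unitRingType) (sigma : {rmorphism F -> F}) (delta : {additive F -> F}).
Hypotheses (hF : division_ring F) (hdelta : sigma_derivation sigma delta).
Local Notation "p ** q" := (skew_mul sigma delta p q) (at level 40, left associativity).
Local Notation I := (in_I sigma delta).

Lemma in_I_deg_bound (Psi : seq {poly F}) : {in Psi, forall P, P != 0} ->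
  exists2 U : {poly F}, U != 0 /\ I Psi U & (deg U <= \sum_(P <- Psi) deg P)%N.
Proof.
move=> nzPsi; have [|U [U0 hU] hdivU] := common_left_multiple hF hdelta
    (L := [seq (1, Q) | Q <- Psi]).
  by move=> _ /mapP [Q hQ ->]; apply: nzPsi.
exists U; last by rewrite big_map in hU.
by split=> // Q hQ; have := hdivU _ (map_f _ hQ); rewrite /= skew_mulp1.
Qed.

Lemma exists_monic_min (Psi : seq {poly F}) :
  (exists G, G != 0 /\ I Psi G) ->
  exists FP : {poly F}, [/\ FP \is monic, I Psi FP &
    forall G : {poly F}, G != 0 -> I Psi G -> (size FP <= size G)%N].
Proof.
move=> /(exists_minimizer (fun G : {poly F} => size G)) [G [G0 GI] Gmin].
have hl : lead_coef G \is a GRing.unit by apply: hF; rewrite lead_coef_eq0.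
have hlr : GRing.lreg (lead_coef G)^-1 by apply: mulrI; rewrite unitrV.
exists ((lead_coef G)^-1%:P * G); split.
- by apply/monicP; rewrite mul_polyC lead_coef_lreg // mulVr.
- by rewrite -(skew_mulCp sigma delta); apply: in_I_mull.
- by move=> K K0 KI; rewrite mul_polyC lreg_size //; apply: Gmin.
Qed.

Lemma sum_deg_cofactors n (Psi t : seq {poly F}) (R : 'I_n -> {poly F}) :
  size Psi = n -> size t = n -> (forall i : 'I_n, t`_i = R i ** Psi`_i) ->
  (forall i, R i != 0) -> (forall i : 'I_n, Psi`_i != 0) ->
  (\sum_(P <- t) deg P = \sum_i deg (R i) + \sum_(P <- Psi) deg P)%N.
Proof.
move=> sPsi st htR R0 Psi0.
rewrite (big_nth 0) [X in (_ + X)%N](big_nth 0) !big_mkord st sPsi -big_split.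
by apply: eq_bigr => i _; rewrite htR deg_skew_mul.
Qed.

Lemma in_I_transfer (Psi Om : seq {poly F}) (G : {poly F}) :
  uniq Psi -> Psi != [::] -> uniq Om -> skew_le sigma delta Psi Om ->
  {in Psi, forall P, P != 0} -> {in Om, forall P, P != 0} ->
  G != 0 -> I Psi G ->
  exists2 H : {poly F}, H != 0 /\ I Om H &
    (deg H + \sum_(P <- Psi) deg P <= deg G + \sum_(P <- Om) deg P)%N.
Proof.
move=> uPsi nePsi uOm hle nzPsi nzOm G0 GI.
have [t [ut st sub_t div_t]] := hle Psi uPsi nePsi (fun _ h => h).
pose n := size Psi.
have /fin_all_exists [SR hSR] : forall i : 'I_n, exists SR : {poly F} * {poly F},
    G = SR.1 ** Psi`_i /\ t`_i = SR.2 ** Psi`_i.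
  move=> i; have [S hS] := GI _ (mem_nth 0 (ltn_ord i)).
  by have [R hR] := div_t _ (ltn_ord i); exists (S, R).
have Psi0 (i : 'I_n) : Psi`_i != 0 by apply/nzPsi/mem_nth.
have R0 (i : 'I_n) : (SR i).2 != 0.
  have ti : t`_i \in Om by apply/sub_t/mem_nth; rewrite st.
  by apply: contraNneq (nzOm _ ti) => R0; rewrite (hSR i).2 R0 skew_mul0p.
(* M is a left common multiple for the pairs (S_i, R_i), so that
   M ** G = (M ** S_i) ** Q_i is divisible by R_i ** Q_i = t_i, and for the
   pairs (G, P) with P in Omega outside t. *)
pose Om' := [seq P <- Om | P \notin t].
pose L := [seq SR i | i <- index_enum 'I_n] ++ [seq (G, P) | P <- Om'].
have [|M [M0 hM] hdivM] := common_left_multiple hF hdelta (L := L).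
  move=> ab; rewrite mem_cat => /orP [/mapP [i _ ->] | /mapP [P hP ->]] //.
  by move: hP; rewrite mem_filter => /andP [_ /nzOm].
exists (M ** G); first split.
- exact: skew_mul_neq0.
- move=> P hP; have [/(nthP 0) [i hi <-] | hPt] := boolP (P \in t).
    rewrite st in hi; have [|T hT] := hdivM (SR (Ordinal hi)).
      by rewrite mem_cat map_f ?mem_index_enum.
    exists T; rewrite {1}(hSR (Ordinal hi)).1 -skew_mulA // hT.
    by rewrite skew_mulA // -(hSR _).2.
  by apply: (hdivM (G, P)); rewrite mem_cat map_f ?orbT // mem_filter hPt.
rewrite deg_skew_mul // (big_uniq_subseq_split _ uOm ut sub_t).
rewrite (@sum_deg_cofactors n Psi t (fun i => (SR i).2)) // => [|i]; last exact: (hSR i).2.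
rewrite addnAC [X in (_ <= X)%N]addnC leq_add2r [X in (_ <= X)%N]addnAC leq_add2r.
by move: hM; rewrite big_cat !big_map big_filter.
Qed.

End IdealBounds.

Theorem mainTheorem4 (F : unitRingType) (sigma : {rmorphism F -> F})
  (delta : {additive F -> F})
  (hF : division_ring F) (hdelta : sigma_derivation sigma delta)
  (Psi Om : seq {poly F})
  (uPsi : uniq Psi) (uOm : uniq Om)
  (nePsi : Psi != [::]) (neOm : Om != [::])
  (degPsi : forall P, P \in Psi -> (1 < size P)%N)
  (degOm : forall P, P \in Om -> (1 < size P)%N)
  (hle : skew_le sigma delta Psi Om) :
  P_independent sigma delta Om -> P_independent sigma delta Psi.
Proof.
move=> [_ [FO [FOmonic FOinI FOmin FOdeg]]].
have nzPsi : {in Psi, forall P, P != 0}.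
  by move=> P /degPsi; rewrite -size_poly_gt0; apply: ltnW.
have nzOm : {in Om, forall P, P != 0}.
  by move=> P /degOm; rewrite -size_poly_gt0; apply: ltnW.
have FO0 : FO != 0 := monic_neq0 FOmonic.
have FOinPsi : in_I sigma delta Psi FO := skew_le_in_I hdelta hle FOinI.
have [FP [FPmonic FPinI FPmin]] :=
  exists_monic_min hF hdelta (ex_intro _ FO (conj FO0 FOinPsi)).
split; first by exists FO.
exists FP; split=> //.
have [U [U0 UinI] Udeg] := in_I_deg_bound hF hdelta nzPsi.
have [H [H0 HinI] Hdeg] :=
  in_I_transfer hF hdelta uPsi nePsi uOm hle nzPsi nzOm (monic_neq0 FPmonic) FPinI.
(* deg FP <= deg U <= sum_Psi deg, and
   sum_Omega deg = deg F_Omega <= deg H <= deg FP + sum_Omega deg - sum_Psi deg. *)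
have := FPmin U U0 UinI; have := FOmin H H0 HinI; lia.
Qed.
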